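(* Let $1\leq a_1\leq\cdots\leq a_k$, $k\geq 3$, be a partition of a natural number $n$ such that $a_{k-1}\leq a_k-2$. Then $$S(a_1,\dots,a_{k-2},a_{k-1},a_k)\prec S(a_1,\dots,a_{k-2},a_{k-1}+1,a_k-1).$$
   Context: $M_k(G)$ denotes the number of closed walks of length $k$ in a graph $G$. For graphs $G,H$, $G\prec H$ means $M_k(G)\leq M_k(H)$ for all $k\geq 0$ with strict inequality for at least one $k$. For positive integers $a_1,\dots,a_k$, the starlike tree $S(a_1,\dots,a_k)$ is obtained from disjoint paths $P_{a_1+1},\dots,P_{a_k+1}$ ($P_m$ the path on $m$ vertices) by identifying one end vertex of each path into a single vertex (the center); the resulting pendant paths from the center are the branches, of lengths $a_1,\dots,a_k$. *)

From mathcomp Require Import all_boot.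
Set Implicit Arguments. Unset Strict Implicit. Unset Printing Implicit Defensive.

(* A simple graph is a symmetric irreflexive relation e on a finite vertex type. *)

Fixpoint walks (T : finType) (e : rel T) (k : nat) (u v : T) : nat :=
  match k with
  | 0 => (u == v : nat)
  | k'.+1 => \sum_(w : T) (e u w : nat) * walks e k' w v
  end.

Definition closed_walks (T : finType) (e : rel T) (k : nat) : nat :=
  \sum_(u : T) walks e k u u.

Definition walk_prec (T1 T2 : finType) (e1 : rel T1) (e2 : rel T2) : Prop :=
  (forall k, closed_walks e1 k <= closed_walks e2 k) /\
  (exists k, closed_walks e1 k < closed_walks e2 k).

(* Starlike tree S(a_1,...,a_k) for s = [:: a_1; ...; a_k], on vertices
   0 .. sumn s : vertex 0 is the center; branch i (0-based) consists of the
   consecutive vertices p_i+1, ..., p_i+a_i with p_i = a_1+...+a_(i-1),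
   forming a path, and the center is joined to each branch start p_i+1. *)
Definition branch_starts (s : seq nat) : seq nat :=
  [seq (sumn (take i s)).+1 | i <- iota 0 (size s)].

Definition star_adj_ord (s : seq nat) (x y : nat) : bool :=
  (* x < y assumed *)
  ((y == x.+1) && (y \notin branch_starts s)) ||
  ((x == 0) && (y \in branch_starts s)).

Definition starlike_rel (s : seq nat) : rel 'I_(sumn s).+1 :=
  fun x y => (x != y) && star_adj_ord s (minn x y) (maxn x y).
Arguments starlike_rel s : clear implicits.

From mathcomp Require Import all_boot zify.
Set Implicit Arguments. Unset Strict Implicit. Unset Printing Implicit Defensive.

(* The center r and the last two branches form a path P on a_(k-1) + a_k + 1
   vertices, and the move keeps this path but shifts r one step towards its
   middle; the other branches H stay attached to r. As r separates H from P,
   cutting closed walks at their passages through r expresses M_k of the tree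
   through walks that start and end in H or at r, the closed walks of P (the
   same for both trees), and the closed walks at r inside P. All of them are
   monotone in the last quantity, and on a path the closed walks at a vertex
   only increase when the vertex moves towards the middle (by induction on the
   length, using the reflection of the path), strictly so for length
   2 a_(k-1) + 2. *)

(** * Closed walks through a cut vertex *)

Section Walks.
Variable T : finType.
Implicit Types (e : rel T) (u v : T).

Lemma walks_add e a b u v :
  walks e (a + b) u v = \sum_w walks e a u w * walks e b w v.
Proof.
elim: a u => [|a IH] u /=.
  rewrite (bigD1 u) //= eqxx mul1n big1 ?addn0 // => w /negbTE.
  by rewrite eq_sym => ->.
under eq_bigr do rewrite IH big_distrr.
rewrite exchange_big; apply: eq_bigr => x _.
rewrite big_distrl; apply: eq_bigr => w _.
by rewrite /= mulnA.
Qed.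

Lemma walks1 e u v : walks e 1 u v = e u v.
Proof.
rewrite /= (bigD1 v) //= eqxx muln1 big1 ?addn0 // => w /negbTE ->.
by rewrite muln0.
Qed.

Lemma walksSr e k u v :
  walks e k.+1 u v = \sum_w walks e k u w * e w v.
Proof. by rewrite -addn1 walks_add; under eq_bigr do rewrite walks1. Qed.

Lemma walks_sym e : symmetric e -> forall k u v, walks e k u v = walks e k v u.
Proof.
move=> e_sym; elim=> [|k IH] u v; first by rewrite /= eq_sym.
by rewrite walksSr; apply: eq_bigr => w _; rewrite IH e_sym mulnC.
Qed.

End Walks.

Lemma ltn_sum (I : finType) (P : pred I) (F G : I -> nat) i0 :
  P i0 -> (forall i, P i -> F i <= G i) -> F i0 < G i0 ->
  \sum_(i | P i) F i < \sum_(i | P i) G i.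
Proof.
move=> Pi0 FG FGi0; rewrite (bigD1 i0) //= [X in _ < X](bigD1 i0) //= -addSn.
by apply: leq_add => //; apply: leq_sum => i /andP[Pi _]; apply: FG.
Qed.

Section CutVertex.
Variables (T : finType) (r : T) (H : pred T).
Implicit Types (e : rel T) (u v w y : T).

Definition off_H e : rel T := fun u v => [&& e u v, ~~ H u & ~~ H v].

Definition cuts_H e := forall u v, H u -> ~~ H v -> e u v -> v = r.

Definition entry_walks e k y := \sum_(w | H w) e r w * walks e k w y.

Lemma off_H_sym e : symmetric e -> symmetric (off_H e).
Proof. by move=> e_sym u v; rewrite /off_H e_sym [~~ H u && _]andbC. Qed.

Lemma walks_off_H_into_H e k u v : ~~ H u -> H v -> walks (off_H e) k u v = 0.
Proof.
elim: k u => [|k IH] u Hu Hv /=.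
  by case: eqP => // uv; rewrite uv Hv in Hu.
apply: big1 => w _; rewrite /off_H; case Hw: (H w); first by rewrite !andbF.
by rewrite IH ?Hw // muln0.
Qed.

(* Cut a walk from outside H at its first step into H, which leaves from r. *)
Lemma walks_first_entry e : symmetric e -> cuts_H e -> forall k u y, ~~ H u ->
  walks e k u y = walks (off_H e) k u y +
    \sum_(a < k) walks (off_H e) a u r * entry_walks e (k - a.+1) y.
Proof.
move=> e_sym e_cut; elim=> [|k IH] u y Hu; first by rewrite big_ord0 addn0.
have e_split w : e u w = off_H e u w + (e u w && H w) :> nat.
  by rewrite /off_H Hu; case: (e u w); case: (H w).
have into_H : \sum_w (e u w && H w) * walks e k w y = (u == r) * entry_walks e k y.
  have [->|u_ne_r] := eqVneq u r.
    rewrite mul1n [RHS]big_mkcond /=; apply: eq_bigr => w _.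
    by case: (H w); rewrite ?andbT ?andbF.
  rewrite mul0n big1 // => w _.
  case ew: (e u w) => //; case Hw: (H w) => //=.
  have ewu : e w u by rewrite e_sym ew.
  by rewrite (e_cut w u Hw Hu ewu) eqxx in u_ne_r.
rewrite [LHS]/=; under eq_bigr => w _ do rewrite e_split mulnDl.
rewrite big_split /= into_H big_ord_recl /= subSS subn0 addnCA addnC; congr (_ + _).
rewrite [X in _ = _ + X](eq_bigr (fun i : 'I_k =>
  \sum_w off_H e u w * walks (off_H e) i w r * entry_walks e (k - i.+1) y)); last first.
  by move=> i _; rewrite add0n /bump leq0n add1n subSS big_distrl.
rewrite exchange_big -big_split /=; apply: eq_bigr => w _.
case off_uw: (off_H e u w); last by rewrite big1.
have Hw : ~~ H w by move: off_uw => /and3P[].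
by rewrite IH // !mul1n; under eq_bigr do rewrite mul1n.
Qed.

Hypothesis r_notin_H : ~~ H r.

Lemma sum_off_H_walks_to_r e : symmetric e -> forall a b,
  \sum_(u | ~~ H u) walks (off_H e) a u r * walks (off_H e) b u r =
  walks (off_H e) (a + b) r r.
Proof.
move=> e_sym a b; rewrite walks_add [RHS](bigID H) /= [X in _ = X + _]big1 => [|u Hu].
  by apply: eq_bigr => u _; rewrite (walks_sym (off_H_sym e_sym)).
by rewrite walks_off_H_into_H.
Qed.

(* Closed walks of length k based outside H and entering H: [a] steps to r,
   a step into w, and, read backwards from the base, [b] steps to r followed by
   an entry walk to w; summing over the base glues the two outer pieces into one
   closed walk of length a + b at r. *)
Definition via_H_term e k a w := e r w *
  \sum_(b < k - a.+1) entry_walks e (k - a.+1 - b.+1) w * walks (off_H e) (a + b) r r.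

Definition via_H_walks e k := \sum_(a < k) \sum_(w | H w) via_H_term e k a w.

Lemma via_H_term_last e n w : H w ->
  via_H_term e n.+2 n w = e r w * (e r w * walks (off_H e) n r r).
Proof.
move=> Hw; rewrite /via_H_term subSn // subnn big_ord1 addn0; congr (_ * (_ * _)).
rewrite /entry_walks (bigD1 w) //= eqxx muln1 big1 ?addn0 // => w' /andP[_ /negbTE].
by rewrite /= => ->; rewrite muln0.
Qed.

Lemma closed_walks_cut e : symmetric e -> cuts_H e -> forall k,
  closed_walks e k = \sum_(u | H u) walks e k u u +
    \sum_(u | ~~ H u) walks (off_H e) k u u + via_H_walks e k.
Proof.
move=> e_sym e_cut k; rewrite /closed_walks (bigID H) /= -addnA; congr (_ + _).
rewrite (eq_bigr _ (fun u Hu => walks_first_entry e_sym e_cut k u Hu)) big_split /=.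
congr (_ + _); rewrite exchange_big; apply: eq_bigr => a _.
set j := k - a.+1; under eq_bigr do rewrite /entry_walks big_distrr.
rewrite exchange_big; apply: eq_bigr => w Hw.
under eq_bigr => u _ do rewrite /= mulnCA.
rewrite -big_distrr /=; congr (_ * _).
rewrite (eq_bigr (fun u => \sum_(b < j) entry_walks e (j - b.+1) w *
           (walks (off_H e) a u r * walks (off_H e) b u r))) => [|u Hu].
  by rewrite exchange_big; apply: eq_bigr => b _; rewrite -big_distrr sum_off_H_walks_to_r.
rewrite (walks_sym e_sym) (walks_first_entry e_sym e_cut _ _ Hu).
rewrite (walks_off_H_into_H _ _ Hu Hw) add0n big_distrr; apply: eq_bigr => b _.
by rewrite /= mulnA mulnC.
Qed.

Section Compare.
Variables e1 e2 : rel T.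
Hypotheses (e1_sym : symmetric e1) (e2_sym : symmetric e2).
Hypotheses (e1_cut : cuts_H e1) (e2_cut : cuts_H e2).
Hypothesis e12_on_H : forall u v, H u -> e1 u v = e2 u v.
Hypothesis off_H_walks_r_le :
  forall k, walks (off_H e1) k r r <= walks (off_H e2) k r r.
Hypothesis off_H_closed_walks_eq : forall k,
  \sum_(u | ~~ H u) walks (off_H e1) k u u = \sum_(u | ~~ H u) walks (off_H e2) k u u.

Lemma e12_from_r w : H w -> e1 r w = e2 r w.
Proof. by move=> Hw; rewrite e1_sym e2_sym e12_on_H. Qed.

Lemma walks_le_in_H_or_r k u v : H u || (u == r) -> H v || (v == r) ->
  walks e1 k u v <= walks e2 k u v.
Proof.
elim/ltn_ind: k u v => k IH u v /orP[Hu|/eqP->] Hv.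
  case: k IH => [//|k] IH /=; apply: leq_sum => w _.
  rewrite -e12_on_H //; case e1uw: (e1 u w) => //; rewrite !mul1n IH //.
  by case Hw: (H w) => //=; rewrite (e1_cut Hu _ e1uw) ?Hw ?eqxx.
rewrite (walks_first_entry e1_sym e1_cut) // (walks_first_entry e2_sym e2_cut) //.
apply: leq_add.
  by case/orP: Hv => [Hv|/eqP->]; [rewrite !walks_off_H_into_H | apply: off_H_walks_r_le].
apply: leq_sum => a _; apply: leq_mul; first exact: off_H_walks_r_le.
apply: leq_sum => w Hw; rewrite e12_from_r // leq_mul //.
by apply: IH; rewrite ?Hw // subnSK // leq_subr.
Qed.

Lemma via_H_term_le k a w : H w -> via_H_term e1 k a w <= via_H_term e2 k a w.
Proof.
move=> Hw; rewrite /via_H_term e12_from_r // leq_mul //.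
apply: leq_sum => b _; apply: leq_mul => //; apply: leq_sum => w' Hw'.
by rewrite e12_from_r // leq_mul // walks_le_in_H_or_r ?Hw ?Hw'.
Qed.

Lemma closed_walks_le k : closed_walks e1 k <= closed_walks e2 k.
Proof.
rewrite (closed_walks_cut e1_sym e1_cut) (closed_walks_cut e2_sym e2_cut).
rewrite off_H_closed_walks_eq leq_add ?leq_add2r //.
  by apply: leq_sum => u Hu; rewrite walks_le_in_H_or_r ?Hu.
by apply: leq_sum => a _; apply: leq_sum => w; apply: via_H_term_le.
Qed.

Lemma closed_walks_lt n w : H w -> e1 r w ->
  walks (off_H e1) n r r < walks (off_H e2) n r r ->
  closed_walks e1 n.+2 < closed_walks e2 n.+2.
Proof.
move=> Hw e1rw lt_n.
rewrite (closed_walks_cut e1_sym e1_cut) (closed_walks_cut e2_sym e2_cut).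
rewrite off_H_closed_walks_eq -addnS leq_add ?leq_add2r //.
  by apply: leq_sum => u Hu; rewrite walks_le_in_H_or_r ?Hu.
apply: (ltn_sum (i0 := @Ordinal n.+2 n (leqnSn n.+1))) => // [a _|].
  by apply: leq_sum => w'; apply: via_H_term_le.
apply: (ltn_sum (i0 := w)) => // [w' Hw'|]; first exact: via_H_term_le.
by rewrite !via_H_term_last // -e12_from_r // e1rw !mul1n.
Qed.

End Compare.
End CutVertex.

(** * Walks on a path *)

Fixpoint path_walks (M k i j : nat) : nat :=
  match k with
  | 0 => i == j
  | k.+1 => (0 < i) * path_walks M k i.-1 j + (i < M) * path_walks M k i.+1 j
  end.

Section PathWalks.
Variable M : nat.
Local Notation pw := (path_walks M).

Lemma path_walksS k i j :
  pw k.+1 i j = (0 < i) * pw k i.-1 j + (i < M) * pw k i.+1 j.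
Proof. by []. Qed.

Lemma path_walks_reflect k i j : i <= M -> j <= M -> pw k i j = pw k (M - i) (M - j).
Proof.
elim: k i => [|k IH] i iM jM /=; first by congr nat_of_bool; apply/eqP/eqP; lia.
have -> : (0 < M - i) = (i < M) by lia.
have -> : (M - i < M) = (0 < i) by lia.
rewrite addnC; congr (_ + _).
  by case: ltnP => // lt_iM; rewrite IH //; congr (_ * pw _ _ _); lia.
by case: ltnP => // lt_0i; rewrite IH //; try lia; congr (_ * pw _ _ _); lia.
Qed.

Lemma path_walksSr k i j : i <= M -> j <= M ->
  pw k.+1 i j = (0 < j) * pw k i j.-1 + (j < M) * pw k i j.+1.
Proof.
elim: k i j => [|k IH] i j iM jM.
  case: i iM => [|i] iM; case: j jM => [|j] jM /=; rewrite ?eqSS;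
  repeat (case: eqP => /= ?); repeat (case: ltnP => /= ?); lia.
have L1 : (0 < i) * pw k.+1 i.-1 j =
          (0 < i) * ((0 < j) * pw k i.-1 j.-1 + (j < M) * pw k i.-1 j.+1).
  by case: i iM => [|i] iM; rewrite ?mul0n // IH //; lia.
have L2 : (i < M) * pw k.+1 i.+1 j =
          (i < M) * ((0 < j) * pw k i.+1 j.-1 + (j < M) * pw k i.+1 j.+1).
  by case: ltnP => lt_iM; rewrite ?mul0n // IH.
rewrite path_walksS L1 L2 [pw k.+1 i j.-1]path_walksS [pw k.+1 i j.+1]path_walksS.
by case: (0 < i); case: (0 < j); case: (i < M); case: (j < M); lia.
Qed.

Lemma path_walks_sym k i j : i <= M -> j <= M -> pw k i j = pw k j i.
Proof.
elim: k i j => [|k IH] i j iM jM; first by rewrite /= eq_sym.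
rewrite path_walksSr // path_walksS (IH i j.-1); try lia.
by case: (ltnP j M) => lt_jM; rewrite ?mul0n // (IH i j.+1).
Qed.

(* On the antidiagonal i + j + 1 = M the shift is the reflection composed with symmetry. *)
Lemma path_walks_shift_edge k i j : i + j.+1 = M -> pw k i.+1 j.+1 = pw k i j.
Proof.
move=> ijM; rewrite path_walks_reflect; try lia.
by rewrite (_ : M - i.+1 = j) 1?(_ : M - j.+1 = i) 1?path_walks_sym //; lia.
Qed.

Lemma path_walks_shift k i j : i + j < M -> pw k i j <= pw k i.+1 j.+1.
Proof.
elim: k i j => [|k IH] i j ijM; first by rewrite /= eqSS.
have [ijM'|lt_ijM] := eqVneq (i + j.+1) M; first by rewrite path_walks_shift_edge.
rewrite !path_walksS /= (_ : i < M) 1?(_ : i.+1 < M) ?mul1n; try lia.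
apply: leq_add; last by apply: IH; lia.
by case: i ijM {lt_ijM} => [|i] ijM; rewrite ?mul0n // mul1n IH //; lia.
Qed.

Lemma path_walks_gt0 d i : i + d <= M -> 0 < pw d i (i + d).
Proof.
elim: d i => [|d IH] i idM; first by rewrite addn0 /= eqxx.
rewrite path_walksS (_ : i < M) 1?mul1n; last by lia.
by rewrite ltn_addl // -addSnnS IH //; lia.
Qed.

Lemma path_walks_shift_lt i j : i + j + 2 <= M ->
  pw (i + j + 2) i j < pw (i + j + 2) i.+1 j.+1.
Proof.
elim: i j => [|i IH] j ijM.
  rewrite add0n addn2 (path_walksS j.+1 0 j) (path_walksS j.+1 1 j.+1).
  rewrite (_ : 0 < M) 1?(_ : 1 < M) ?mul0n ?mul1n ?add0n; try lia.
  rewrite -addn1 [X in _ <= X]addnC leq_add ?path_walks_shift //; try lia.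
  by have := @path_walks_gt0 j.+1 0; rewrite add0n; apply; lia.
rewrite (_ : i.+1 + j + 2 = (i + j + 2).+1); last by lia.
rewrite (path_walksS _ i.+1 j) (path_walksS _ i.+2 j.+1).
rewrite (_ : i.+1 < M) 1?(_ : i.+2 < M) ?mul1n; try lia.
rewrite -addSn leq_add ?IH ?path_walks_shift //; lia.
Qed.

End PathWalks.

Section PathRelabel.
Variables (T : finType) (H : pred T) (e : rel T) (M : nat).
Variables (pos : T -> nat) (vertex : nat -> T).
Hypothesis pos_le : forall u, ~~ H u -> pos u <= M.
Hypothesis vertex_notin_H : forall m, m <= M -> ~~ H (vertex m).
Hypothesis vertexK : forall m, m <= M -> pos (vertex m) = m.
Hypothesis posK : forall u, ~~ H u -> vertex (pos u) = u.
Hypothesis e_path : forall u v, ~~ H u -> ~~ H v ->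
  e u v = (pos u == (pos v).+1) || (pos v == (pos u).+1).

Lemma sum_at_pos m (F : nat -> nat) :
  \sum_w (~~ H w && (pos w == m)) * F (pos w) = (m <= M) * F m.
Proof.
have [mM|Mm] := leqP m M; last first.
  rewrite big1 // => w _; case Hw: (H w); rewrite /= ?mul0n //.
  by have := pos_le (negbT Hw); case: eqP => //; lia.
rewrite (bigD1 (vertex m)) ?vertex_notin_H ?vertexK ?eqxx //= big1 ?addn0 // => w.
case Hw: (H w) => //= /negbTE w_ne; case: eqP => // pos_w.
by rewrite -pos_w posK ?Hw ?eqxx in w_ne.
Qed.

Lemma walks_off_H_path k u v : ~~ H u -> ~~ H v ->
  walks (off_H H e) k u v = path_walks M k (pos u) (pos v).
Proof.
elim: k u => [|k IH] u Hu Hv.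
  rewrite /=; congr nat_of_bool; apply/eqP/eqP => [->//|pos_uv].
  by rewrite -(posK Hu) pos_uv posK.
set F := fun m => path_walks M k m (pos v).
have pred_le : (pos u).-1 <= M by have := pos_le Hu; lia.
rewrite /= (eq_bigr (fun w => (0 < pos u) * ((~~ H w && (pos w == (pos u).-1)) * F (pos w)) +
    (~~ H w && (pos w == (pos u).+1)) * F (pos w))) => [|w _].
  by rewrite big_split -big_distrr /= !sum_at_pos pred_le mul1n.
rewrite /off_H Hu /=; case Hw: (H w); rewrite /= ?andbF ?mul0n ?muln0 // andbT.
rewrite IH ?Hw // e_path ?Hw // mulnA -mulnDl; congr (_ * _).
by case: eqP; case: eqP; case: eqP; case: (ltnP 0 (pos u)) => /=; lia.
Qed.

Lemma sum_off_H_pos (F : nat -> nat) :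
  \sum_(u | ~~ H u) F (pos u) = \sum_(m < M.+1) F m.
Proof.
rewrite [RHS](eq_bigr (fun m : 'I_M.+1 =>
  \sum_w (~~ H w && (pos w == m)) * F (pos w))) => [|m _]; last first.
  by rewrite sum_at_pos -ltnS ltn_ord mul1n.
rewrite exchange_big [LHS]big_mkcond; apply: eq_bigr => u _.
rewrite -big_distrl /=; case Hu: (H u) => /=; first by rewrite big1.
rewrite (bigD1 (inord (pos u))) /= ?inordK ?ltnS ?pos_le ?Hu ?eqxx // big1 ?addn0 ?mul1n //.
by move=> m m_ne; case: eqP => // pos_u; rewrite pos_u inord_val eqxx in m_ne.
Qed.

End PathRelabel.

(** * Starlike trees *)

Lemma branch_starts_cat s t : branch_starts (s ++ t) =
  branch_starts s ++ map (addn (sumn s)) (branch_starts t).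
Proof.
rewrite /branch_starts size_cat iotaD map_cat add0n; congr (_ ++ _).
  apply/eq_in_map => i; rewrite mem_iota add0n => /andP[_ lt_is].
  by rewrite take_cat lt_is.
rewrite -[in LHS](addn0 (size s)) iotaDl -!map_comp; apply: eq_map => i /=.
by rewrite take_cat ltnNge leq_addr /= addKn sumn_cat addnS.
Qed.

Lemma branch_starts_bounds s y : all (fun x => 0 < x) s ->
  y \in branch_starts s -> 0 < y <= sumn s.
Proof.
move=> /allP s_pos /mapP[i]; rewrite mem_iota add0n => /andP[_ lt_is] ->.
rewrite ltn0Sn /= -{2}(cat_take_drop i s) sumn_cat (drop_nth 0 lt_is) /=.
by have := s_pos _ (mem_nth 0 lt_is) => /= ?; lia.
Qed.

Definition star_rel (s : seq nat) : rel nat :=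
  fun x y => (x != y) && star_adj_ord s (minn x y) (maxn x y).

Lemma star_rel_sym s : symmetric (star_rel s).
Proof. by move=> x y; rewrite /star_rel eq_sym minnC maxnC. Qed.

Section LastTwoBranches.
Variable c : seq nat.
Local Notation S := (sumn c).

Lemma mem_branch_starts_cat2 X Y y : y \in branch_starts (c ++ [:: X; Y]) =
  [|| y \in branch_starts c, y == S.+1 | y == S + X.+1].
Proof. by rewrite branch_starts_cat mem_cat /= !inE addn1 addn0 addnS. Qed.

Lemma star_rel_cat2_inner X Y u v : 0 < X -> 0 < u <= S ->
  star_rel (c ++ [:: X; Y]) u v = star_rel (c ++ [:: 1]) u v.
Proof.
move=> X_gt0 u_in; rewrite /star_rel /star_adj_ord mem_branch_starts_cat2.
rewrite branch_starts_cat mem_cat /= !inE addn1 !orbA.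
case: (maxn u v =P S + X.+1) => [max_uv|_]; last by rewrite !orbF.
have -> : (maxn u v == (minn u v).+1) = false by apply/eqP; lia.
by have -> : (minn u v == 0) = false by apply/eqP; lia.
Qed.

Ltac case_ifs := repeat (case: ifP => [?|/negbT ?]).

(* The center and the last two branches form a path, numbered from the tip of
   the branch of length [X]: the center sits at position [X]. *)
Definition path_pos X (u : nat) :=
  if u == 0 then X else if u <= S + X then X - (u - S) else X + (u - (S + X)).

Definition path_vertex X m :=
  if m == X then 0 else if m < X then S + (X - m) else S + X + (m - X).

Definition on_path X Y u := (u == 0) || (S < u <= S + X + Y).

Lemma path_pos_le X Y u : on_path X Y u -> path_pos X u <= X + Y.
Proof. by rewrite /on_path /path_pos; case_ifs; lia. Qed.

Lemma path_vertex_on_path X Y m : m <= X + Y -> on_path X Y (path_vertex X m).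
Proof. by rewrite /on_path /path_vertex; case_ifs; lia. Qed.

Lemma path_vertexK X m : path_pos X (path_vertex X m) = m.
Proof. by rewrite /path_vertex; case_ifs; rewrite /path_pos /=; case_ifs; lia. Qed.

Lemma path_posK X Y (u : nat) : 0 < X -> on_path X Y u -> path_vertex X (path_pos X u) = u.
Proof. by rewrite /on_path /path_pos; case_ifs; rewrite /path_vertex /=; case_ifs; lia. Qed.

Lemma star_rel_cat2_path X Y (u v : nat) : all (fun x => 0 < x) c ->
  0 < X -> 0 < Y -> on_path X Y u -> on_path X Y v ->
  star_rel (c ++ [:: X; Y]) u v =
  (path_pos X u == (path_pos X v).+1) || (path_pos X v == (path_pos X u).+1).
Proof.
move=> c_pos X_gt0 Y_gt0 u_on v_on; rewrite /star_rel /star_adj_ord mem_branch_starts_cat2.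
have -> : (maxn u v \in branch_starts c) = false.
  by apply/negP => /(branch_starts_bounds c_pos); move: u_on v_on; rewrite /on_path; lia.
move: u_on v_on; rewrite /on_path /path_pos /= => u_on v_on; case_ifs; apply/idP/idP; lia.
Qed.

End LastTwoBranches.

(* [starlike_rel s] is [rel_on (sumn s) (star_rel s)]; going through [rel_on]
   lets two trees with the same number of vertices share a vertex type. *)
Definition rel_on N (E : rel nat) : rel 'I_N.+1 := fun x y => E x y.
Arguments rel_on : clear implicits.

Lemma closed_walks_rel_on N1 N2 E :
  N1 = N2 -> closed_walks (rel_on N1 E) =1 closed_walks (rel_on N2 E).
Proof. by move->. Qed.

Section StarlikeLastTwo.
Variable c : seq nat.
Hypothesis c_pos : all (fun x => 0 < x) c.
Variables N X Y : nat.
Hypotheses (X_gt0 : 0 < X) (Y_gt0 : 0 < Y) (N_def : N = sumn c + X + Y).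
Local Notation S := (sumn c).

Definition inner : pred 'I_N.+1 := fun u => 0 < u <= S.

Local Notation tree := (rel_on N (star_rel (c ++ [:: X; Y]))).
Local Notation pos u := (path_pos c X u).
Local Notation vertex m := (inord (path_vertex c X m) : 'I_N.+1).

Lemma notin_inner_on_path (u : 'I_N.+1) : ~~ inner u -> on_path c X Y u.
Proof. by have := ltn_ord u; rewrite /inner /on_path; lia. Qed.

Lemma tree_sym : symmetric tree.
Proof. by move=> u v; apply: star_rel_sym. Qed.

Lemma tree_inner u v : inner u -> tree u v = star_rel (c ++ [:: 1]) u v.
Proof. exact: star_rel_cat2_inner. Qed.

Lemma tree_cuts : cuts_H ord0 inner tree.
Proof.
move=> u v u_in v_out; rewrite tree_inner // /star_rel /star_adj_ord branch_starts_cat.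
rewrite mem_cat /= !inE addn1 => adj; apply: val_inj => /=.
by move: u_in v_out adj; rewrite /inner; case: (_ \in branch_starts c); lia.
Qed.

Lemma vertex_on_path m : m <= X + Y -> path_vertex c X m < N.+1.
Proof. by move/(path_vertex_on_path c); rewrite /on_path N_def; lia. Qed.

Lemma tree_pos_le u : ~~ inner u -> pos u <= X + Y.
Proof. by move/notin_inner_on_path; apply: path_pos_le. Qed.

Lemma tree_vertex_notin_inner m : m <= X + Y -> ~~ inner (vertex m).
Proof.
move=> mM; have := path_vertex_on_path c mM.
by rewrite /inner /on_path inordK ?vertex_on_path //; lia.
Qed.

Lemma tree_vertexK m : m <= X + Y -> pos (vertex m) = m.
Proof. by move=> mM; rewrite inordK ?vertex_on_path ?path_vertexK. Qed.

Lemma tree_posK u : ~~ inner u -> vertex (pos u) = u.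
Proof.
move=> u_out; apply: val_inj.
by rewrite /= (path_posK X_gt0 (notin_inner_on_path u_out)) inord_val.
Qed.

Lemma tree_off_inner u v : ~~ inner u -> ~~ inner v ->
  tree u v = (pos u == (pos v).+1) || (pos v == (pos u).+1).
Proof. by move=> u_out v_out; rewrite /rel_on star_rel_cat2_path ?notin_inner_on_path. Qed.

Lemma tree_off_walks k u v : ~~ inner u -> ~~ inner v ->
  walks (off_H inner tree) k u v = path_walks (X + Y) k (pos u) (pos v).
Proof.
exact: (walks_off_H_path tree_pos_le tree_vertex_notin_inner tree_vertexK tree_posK
  tree_off_inner).
Qed.

Lemma tree_off_walks_center k :
  walks (off_H inner tree) k ord0 ord0 = path_walks (X + Y) k X X.
Proof. by rewrite tree_off_walks. Qed.

Lemma tree_off_closed_walks k :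
  \sum_(u | ~~ inner u) walks (off_H inner tree) k u u =
  \sum_(m < (X + Y).+1) path_walks (X + Y) k m m.
Proof.
rewrite -(sum_off_H_pos tree_pos_le tree_vertex_notin_inner tree_vertexK tree_posK
  (fun m => path_walks (X + Y) k m m)).
by apply: eq_bigr => u u_out; rewrite tree_off_walks.
Qed.

End StarlikeLastTwo.
Arguments inner : clear implicits.

Lemma starlike_cat2_transfer (c : seq nat) A B :
  c != [::] -> all (fun x => 0 < x) c -> 0 < A -> A + 2 <= B ->
  walk_prec (starlike_rel (c ++ [:: A; B])) (starlike_rel (c ++ [:: A.+1; B.-1])).
Proof.
move=> c_nil c_pos A_gt0 AB; set N := sumn c + A + B.
have N_def' : N = sumn c + A.+1 + B.-1 by rewrite /N; lia.
have [B_gt0 B1_gt0] : 0 < B /\ 0 < B.-1 by split; lia.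
have len_eq : A.+1 + B.-1 = A + B by lia.
set e1 := rel_on N (star_rel (c ++ [:: A; B])).
set e2 := rel_on N (star_rel (c ++ [:: A.+1; B.-1])).
have cw1 : closed_walks (starlike_rel (c ++ [:: A; B])) =1 closed_walks e1.
  by apply: closed_walks_rel_on; rewrite sumn_cat /= addn0 addnA.
have cw2 : closed_walks (starlike_rel (c ++ [:: A.+1; B.-1])) =1 closed_walks e2.
  by apply: closed_walks_rel_on; rewrite sumn_cat /= addn0 addnA -N_def'.
have center1 k : walks (off_H (inner c N) e1) k ord0 ord0 = path_walks (A + B) k A A.
  exact: tree_off_walks_center.
have center2 k :
    walks (off_H (inner c N) e2) k ord0 ord0 = path_walks (A + B) k A.+1 A.+1.
  by rewrite tree_off_walks_center // len_eq.
have center_le k : walks (off_H (inner c N) e1) k ord0 ord0 <=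
                   walks (off_H (inner c N) e2) k ord0 ord0.
  by rewrite center1 center2 path_walks_shift //; lia.
have off_eq k : \sum_(u | ~~ inner c N u) walks (off_H (inner c N) e1) k u u =
                \sum_(u | ~~ inner c N u) walks (off_H (inner c N) e2) k u u.
  by rewrite !tree_off_closed_walks // len_eq.
have inner_eq u v : inner c N u -> e1 u v = e2 u v.
  by move=> u_in; rewrite /e1 /e2 !tree_inner.
have cut1 := tree_cuts c_pos A_gt0 B_gt0 (erefl : N = sumn c + A + B).
have cut2 := tree_cuts c_pos (ltn0Sn A) B1_gt0 N_def'.
have [sym1 sym2] := (@tree_sym c N A B, @tree_sym c N A.+1 B.-1).
split=> [k|]; first by rewrite cw1 cw2 (closed_walks_le _ sym1 sym2 cut1 cut2).
exists (A + A + 2).+2; rewrite cw1 cw2.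
have S_gt0 : 0 < sumn c by move: c_nil c_pos; case: (c) => //= x s _ /andP[]; lia.
apply: (closed_walks_lt _ sym1 sym2 cut1 cut2 inner_eq center_le off_eq (w := inord 1)).
- by [].
- by rewrite /inner inordK //=; lia.
- by rewrite /rel_on inordK /star_rel /star_adj_ord //=; [case: (1 \in _) | lia].
- by rewrite center1 center2 path_walks_shift_lt //; lia.
Qed.

Theorem proposition1 (a : seq nat) :
  3 <= size a ->
  all (fun x => 1 <= x) a ->
  sorted leq a ->
  nth 0 a (size a).-2 + 2 <= nth 0 a (size a).-1 ->
  walk_prec (starlike_rel a)
    (starlike_rel (take (size a).-2 a ++
                   [:: (nth 0 a (size a).-2).+1; (nth 0 a (size a).-1).-1])).
Proof.
move=> size_a a_pos _ last_two.
have [lt2 lt1] : (size a).-2 < size a /\ (size a).-2.+1 < size a by split; lia.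
have a_split : a = take (size a).-2 a ++ [:: nth 0 a (size a).-2; nth 0 a (size a).-1].
  rewrite -{1}[a](cat_take_drop (size a).-2) (drop_nth 0 lt2) (drop_nth 0 lt1).
  by rewrite drop_oversize (_ : (size a).-2.+1 = (size a).-1) //; lia.
have c_nil : take (size a).-2 a != [::].
  by rewrite -size_eq0 size_takel ?(ltnW lt2) // -lt0n; lia.
have c_pos : all (fun x => 0 < x) (take (size a).-2 a).
  by apply/allP => x /mem_take; apply/allP.
have A_gt0 : 0 < nth 0 a (size a).-2 by apply/(allP a_pos)/mem_nth.
by have := starlike_cat2_transfer c_nil c_pos A_gt0 last_two; rewrite -a_split.
Qed.
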